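(* Assume $M$ is nonempty. Then $M$ is connected if and only if for each $k\in\{1,\dots,d\}$ there is a point $(a,b)\in K$ with $a_k=|b_k|$.
   Context: Let $\mathbb C^{d,d}=\mathbb C^d\times\mathbb C^d$ with coordinates $(z,w)$; $\mathbb T^d$ acts by $(z_k,w_k)\mapsto(e^{i\theta_k}z_k,e^{i\theta_k}w_k)$. Fix $u_1,\dots,u_d\in\mathbb Z^n$ spanning $\mathbb R^n$; let $\beta\colon\mathbb R^d\to\mathbb R^n$, $e_k\mapsto u_k$, $\mathfrak n=\ker\beta$ with inclusion $\iota$, and $N\subset\mathbb T^d$ the kernel of the induced homomorphism $\mathbb T^d\to\mathbb T^n$. Identify $\mathbb R^d$ with its dual via the standard inner product. Fix real constants $\lambda^{(j)}_k$, put $\lambda^{(c)}_k=\lambda^{(2)}_k+i\lambda^{(3)}_k$, and let $\mu=(\mu_I,\mu_S,\mu_T)$ with $\mu_I(z,w)=\sum_k(\tfrac12(|z_k|^2+|w_k|^2)+\lambda^{(1)}_k)\iota^*e_k$, $(\mu_S+i\mu_T)(z,w)=\sum_k(iz_k\bar w_k+\lambda^{(c)}_k)\iota^*e_k$; $M=\mu^{-1}(0)/N$. For $(a,b)\in\mathbb R^n\times\mathbb C^n$, $a_k=\langle a,u_k\rangle-\lambda^{(1)}_k$, $b_k=\langle b,u_k\rangle-\lambda^{(c)}_k$, and $K=\{(a,b): a_k\geqslant|b_k|\ \forall k\}$ (this is the image of the moment map $\phi$ of the $\mathbb T^d/N$-action on $M$). *)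

From HB Require Import structures.
From mathcomp Require Import all_boot all_order all_algebra generic_quotient.
From mathcomp Require Import all_classical all_reals.
From mathcomp Require Import all_analysis.
Import numFieldNormedType.Exports.
Set Implicit Arguments. Unset Strict Implicit. Unset Printing Implicit Defensive.
Import Order.TTheory GRing.Theory Num.Theory.
Local Open Scope classical_set_scope.
Local Open Scope ring_scope.

(* A point (z,w) of C^{d,d} = C^d x C^d is encoded by a real 4 x d matrix p:
   z_k = p 0 k + i p 1 k,   w_k = p 2 k + i p 3 k.
   The vectors u_1..u_d in Z^n are the rows of u : 'M[int]_(d,n).
   lam1 k = lambda^(1)_k, lam2 k = lambda^(2)_k, lam3 k = lambda^(3)_k. *)

Section ToricHK.
Variables (R : realType) (d n : nat) (u : 'M[int]_(d, n))
  (lam1 lam2 lam3 : 'I_d -> R).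

Local Notation pt := (matrix R 4 d).
Definition zre (p : pt) k := p (inord 0) k.
Definition zim (p : pt) k := p (inord 1) k.
Definition wre (p : pt) k := p (inord 2) k.
Definition wim (p : pt) k := p (inord 3) k.

Definition uR (k : 'I_d) (j : 'I_n) : R := (u k j)%:~R.

(* n = ker beta, beta(e_k) = u_k *)
Definition in_frak_n (v : 'I_d -> R) : Prop :=
  forall j : 'I_n, \sum_(k < d) v k * uR k j = 0.

(* The components of mu are sum_k c_k iota^* e_k; such a functional on n
   vanishes iff sum_k c_k v_k = 0 for every v in n. *)
Definition coeff_I (p : pt) k : R :=
  2^-1 * (zre p k ^+ 2 + zim p k ^+ 2 + wre p k ^+ 2 + wim p k ^+ 2) + lam1 k.
(* i z_k conj(w_k) = (Re z Im w - Im z Re w) + i (Re z Re w + Im z Im w) *)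
Definition coeff_S (p : pt) k : R :=
  zre p k * wim p k - zim p k * wre p k + lam2 k.
Definition coeff_T (p : pt) k : R :=
  zre p k * wre p k + zim p k * wim p k + lam3 k.

Definition functional_zero (c : 'I_d -> R) : Prop :=
  forall v, in_frak_n v -> \sum_(k < d) c k * v k = 0.

Definition mu_zero : set pt := [set p |
  functional_zero (coeff_I p) /\ functional_zero (coeff_S p) /\
  functional_zero (coeff_T p)].

(* T^d = R^d / 2piZ^d acting by (z_k,w_k) -> (e^{i th_k} z_k, e^{i th_k} w_k) *)
Definition act (th : 'I_d -> R) (p : pt) : pt :=
  \matrix_(r < 4, k < d)
    (if (r == inord 0 :> 'I_4) then cos (th k) * zre p k - sin (th k) * zim p k
     else if (r == inord 1 :> 'I_4) then sin (th k) * zre p k + cos (th k) * zim p k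
     else if (r == inord 2 :> 'I_4) then cos (th k) * wre p k - sin (th k) * wim p k
     else sin (th k) * wre p k + cos (th k) * wim p k).

(* N = kernel of T^d -> T^n induced by beta: th in N iff sum_k th_k u_k in 2piZ^n *)
Definition inN (th : 'I_d -> R) : Prop :=
  exists m : 'I_n -> int, forall j, \sum_(k < d) th k * uR k j = 2 * pi * (m j)%:~R.

Local Notation Z0 := (set_type mu_zero).

Definition orbit (p : Z0) : set Z0 :=
  [set q | exists th, inN th /\ val q = act th (val p)].

Definition orbit_rel : rel Z0 := fun p q => `[< orbit p = orbit q >].

Lemma orbit_rel_refl : reflexive orbit_rel.
Proof. by move=> p; apply/asboolP. Qed.
Lemma orbit_rel_sym : symmetric orbit_rel.
Proof.
move=> p q; apply/idP/idP => /asboolP h; apply/asboolP; exact: esym h.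
Qed.
Lemma orbit_rel_trans : transitive orbit_rel.
Proof.
move=> q p r /asboolP h1 /asboolP h2; apply/asboolP; exact: eq_trans h1 h2.
Qed.

Canonical orbit_equiv := EquivRel orbit_rel orbit_rel_refl orbit_rel_sym
  orbit_rel_trans.

Definition Mq : quotType Z0 := {eq_quot orbit_equiv}%qT.

(* The set K: a in R^n, b = b2 + i b3 in C^n *)
Definition a_k (a : 'I_n -> R) k := \sum_(j < n) a j * uR k j - lam1 k.
Definition b2_k (b2 : 'I_n -> R) k := \sum_(j < n) b2 j * uR k j - lam2 k.
Definition b3_k (b3 : 'I_n -> R) k := \sum_(j < n) b3 j * uR k j - lam3 k.
Definition abs_b_k b2 b3 k : R := Num.sqrt (b2_k b2 k ^+ 2 + b3_k b3 k ^+ 2).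
Definition inK a b2 b3 : Prop := forall k, abs_b_k b2 b3 k <= a_k a k.

End ToricHK.

Notation M u lam1 lam2 lam3 := (quotient_topology (Mq u lam1 lam2 lam3)).

From Pilot Require Import Defs.
From HB Require Import structures.
From mathcomp Require Import all_boot all_order all_algebra generic_quotient.
From mathcomp Require Import all_classical all_reals.
From mathcomp Require Import all_analysis.
From mathcomp Require Import ring lra.
Import numFieldNormedType.Exports.
Import Order.TTheory GRing.Theory Num.Theory.
Local Open Scope classical_set_scope.
Local Open Scope ring_scope.
Set Implicit Arguments. Unset Strict Implicit. Unset Printing Implicit Defensive.

(* The moment map phi of the residual torus sends (z, w) to a_k = (|z_k|^2 + |w_k|^2)/2
   and b_k = i z_k conj(w_k) (shifted by lambda); its fibre over a point of K is a union
   of T^d-orbits, one for each choice of sign of |z_k|^2 - |w_k|^2 = +-2 sqrt(a_k^2 - |b_k|^2),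
   the two signs being the same orbit exactly on the wall a_k = |b_k|.  So M is swept
   by the orbits of 2^d continuous sections of phi over the convex set K.  If every wall
   meets K, any two sections can be joined by moving through the walls, and M is
   connected.  If the k-th wall misses K, then |z_k|^2 - |w_k|^2 is a continuous
   function on M that never vanishes yet takes both signs. *)

Section RealFacts.
Variable R : realType.

Lemma sqr_add_eq0 (x y : R) : x ^+ 2 + y ^+ 2 = 0 -> x = 0 /\ y = 0.
Proof. by move=> h; split; nra. Qed.

Lemma sqrt_le_sqr (x y : R) : 0 <= y -> x <= y ^+ 2 -> Num.sqrt x <= y.
Proof. by move=> y0 hx; rewrite -[y]ger0_norm // -sqrtr_sqr; apply: ler_wsqrtr. Qed.

Lemma unit_circle_angle (c s : R) : c ^+ 2 + s ^+ 2 = 1 ->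
  exists th, cos th = c /\ sin th = s.
Proof.
move=> h.
have hc : -1 <= c <= 1 by apply/andP; split; nra.
have hs : Num.sqrt (1 - c ^+ 2) = `|s| by rewrite -sqrtr_sqr -h addrAC subrr add0r.
have [s0|s0] := leP 0 s.
  by exists (acos c); rewrite acosK ?in_itv // sin_acos // hs ger0_norm.
by exists (- acos c); rewrite cosN sinN acosK ?in_itv // sin_acos // hs ltr0_norm ?opprK.
Qed.

(* When z = x1 + i y1 is nonzero, z' z^-1 is the rotation, and w' is forced
   by z' conj(w') = z conj(w). *)
Lemma common_rotation_nz (x1 y1 x2 y2 x1' y1' x2' y2' : R) :
  x1 ^+ 2 + y1 ^+ 2 != 0 ->
  x1 ^+ 2 + y1 ^+ 2 = x1' ^+ 2 + y1' ^+ 2 ->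
  x1 * y2 - y1 * x2 = x1' * y2' - y1' * x2' ->
  x1 * x2 + y1 * y2 = x1' * x2' + y1' * y2' ->
  exists c s, [/\ c ^+ 2 + s ^+ 2 = 1, x1' = c * x1 - s * y1, y1' = s * x1 + c * y1,
                  x2' = c * x2 - s * y2 & y2' = s * x2 + c * y2].
Proof.
set D := x1 ^+ 2 + y1 ^+ 2 => D0 hD hS hT.
pose P := x1' * x1 + y1' * y1; pose Q := y1' * x1 - x1' * y1.
have eS : (x1 * y2 - y1 * x2) - (x1' * y2' - y1' * x2') = 0 by rewrite hS subrr.
have eT : (x1 * x2 + y1 * y2) - (x1' * x2' + y1' * y2') = 0 by rewrite hT subrr.
have eD : (x1' ^+ 2 + y1' ^+ 2) - D = 0 by rewrite hD subrr.
have ex2 : D * x2' = P * x2 - Q * y2.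
  apply/eqP; rewrite eq_sym -subr_eq0; apply/eqP.
  have -> : P * x2 - Q * y2 - D * x2' =
    x1' * ((x1 * x2 + y1 * y2) - (x1' * x2' + y1' * y2'))
    - y1' * ((x1 * y2 - y1 * x2) - (x1' * y2' - y1' * x2'))
    + ((x1' ^+ 2 + y1' ^+ 2) - D) * x2' by rewrite /P /Q /D; ring.
  by rewrite eS eT eD; ring.
have ey2 : D * y2' = Q * x2 + P * y2.
  apply/eqP; rewrite eq_sym -subr_eq0; apply/eqP.
  have -> : Q * x2 + P * y2 - D * y2' =
    y1' * ((x1 * x2 + y1 * y2) - (x1' * x2' + y1' * y2'))
    + x1' * ((x1 * y2 - y1 * x2) - (x1' * y2' - y1' * x2'))
    + ((x1' ^+ 2 + y1' ^+ 2) - D) * y2' by rewrite /P /Q /D; ring.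
  by rewrite eS eT eD; ring.
exists (P / D), (Q / D); split.
- have PQ : P ^+ 2 + Q ^+ 2 = D ^+ 2 by rewrite [D ^+ 2]expr2 {2}hD /P /Q /D; ring.
  by rewrite !expr_div_n -mulrDl PQ divff // expf_neq0.
- by rewrite /P /Q /D; field.
- by rewrite /P /Q /D; field.
- by apply: (mulfI D0); rewrite ex2; field.
- by apply: (mulfI D0); rewrite ey2; field.
Qed.

Lemma common_rotation (x1 y1 x2 y2 x1' y1' x2' y2' : R) :
  x1 ^+ 2 + y1 ^+ 2 = x1' ^+ 2 + y1' ^+ 2 ->
  x2 ^+ 2 + y2 ^+ 2 = x2' ^+ 2 + y2' ^+ 2 ->
  x1 * y2 - y1 * x2 = x1' * y2' - y1' * x2' ->
  x1 * x2 + y1 * y2 = x1' * x2' + y1' * y2' ->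
  exists c s, [/\ c ^+ 2 + s ^+ 2 = 1, x1' = c * x1 - s * y1, y1' = s * x1 + c * y1,
                  x2' = c * x2 - s * y2 & y2' = s * x2 + c * y2].
Proof.
move=> hz hw hS hT.
have [z0|z0] := eqVneq (x1 ^+ 2 + y1 ^+ 2) 0; last exact: common_rotation_nz.
have [w0|w0] := eqVneq (x2 ^+ 2 + y2 ^+ 2) 0.
  move: (z0) (w0); rewrite {1}hz {1}hw.
  move=> /sqr_add_eq0[-> ->] /sqr_add_eq0[-> ->].
  move: z0 w0 => /sqr_add_eq0[-> ->] /sqr_add_eq0[-> ->].
  by exists 1, 0; split; ring.
(* exchange the roles of z and w *)
have [c [s [cs e2 e3 e1 e4]]] : exists c s, [/\ c ^+ 2 + s ^+ 2 = 1,
    x2' = c * x2 - s * y2, y2' = s * x2 + c * y2,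
    x1' = c * x1 - s * y1 & y1' = s * x1 + c * y1].
  by apply: common_rotation_nz => //; lra.
by exists c, s.
Qed.

Definition disc (A B2 B3 : R) := Num.sqrt (A ^+ 2 - (B2 ^+ 2 + B3 ^+ 2)).

Lemma disc_eq0P A B2 B3 : 0 <= A -> B2 ^+ 2 + B3 ^+ 2 <= A ^+ 2 ->
  disc A B2 B3 = 0 <-> A = Num.sqrt (B2 ^+ 2 + B3 ^+ 2).
Proof.
move=> A0 BA; rewrite /disc; split=> [/eqP|->].
  rewrite sqrtr_eq0 => hle.
  by rewrite (_ : _ + _ = A ^+ 2) ?sqrtr_sqr ?ger0_norm //; lra.
by rewrite sqr_sqrtr ?subrr ?sqrtr0 // addr_ge0 // sqr_ge0.
Qed.

(* With r = sqrt (A + disc), the point (z, w) is (r, (B3 + i B2) / r) if [e]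
   and ((B3 - i B2) / r, r) otherwise: the two points over (A, B2 + i B3)
   with z real or w real, and |z|^2 = A + disc, resp. A - disc. *)
Definition sroot A B2 B3 := Num.sqrt (A + disc A B2 B3).
Definition sec_zre (e : bool) A B2 B3 := if e then sroot A B2 B3 else B3 / sroot A B2 B3.
Definition sec_zim (e : bool) A B2 B3 := if e then 0 else - (B2 / sroot A B2 B3).
Definition sec_wre (e : bool) A B2 B3 := if e then B3 / sroot A B2 B3 else sroot A B2 B3.
Definition sec_wim (e : bool) A B2 B3 := if e then B2 / sroot A B2 B3 else 0.

Lemma sec_spec e A B2 B3 : 0 <= A -> B2 ^+ 2 + B3 ^+ 2 <= A ^+ 2 ->
  let z0 := sec_zre e A B2 B3 in let z1 := sec_zim e A B2 B3 in
  let w0 := sec_wre e A B2 B3 in let w1 := sec_wim e A B2 B3 in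
  [/\ 2^-1 * (z0 ^+ 2 + z1 ^+ 2 + (w0 ^+ 2 + w1 ^+ 2)) = A,
      z0 * w1 - z1 * w0 = B2, z0 * w0 + z1 * w1 = B3 &
      z0 ^+ 2 + z1 ^+ 2 = if e then A + disc A B2 B3 else A - disc A B2 B3].
Proof.
move=> A0 BA /=; rewrite /sec_zre /sec_zim /sec_wre /sec_wim /sroot.
set s := disc A B2 B3; set r := Num.sqrt (A + s).
have s0 : 0 <= s by apply: sqrtr_ge0.
have s2 : s ^+ 2 = A ^+ 2 - (B2 ^+ 2 + B3 ^+ 2) by rewrite sqr_sqrtr // subr_ge0.
have [As0|As0] := eqVneq (A + s) 0.
  have [A_0 s_0] : A = 0 /\ s = 0 by lra.
  rewrite A_0 expr0n /= in BA; rewrite A_0 s_0.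
  have [-> ->] : B2 = 0 /\ B3 = 0 by apply: sqr_add_eq0; nra.
  have -> : r = 0 by rewrite /r As0 sqrtr0.
  by case: e; rewrite !(mul0r, mulr0, invr0, oppr0, expr0n, addr0, subr0).
have r2 : r ^+ 2 = A + s by rewrite sqr_sqrtr //; lra.
have r0 : r != 0 by rewrite sqrtr_eq0 -ltNge lt_def As0 /=; lra.
have B3s : B3 ^+ 2 = A ^+ 2 - s ^+ 2 - B2 ^+ 2 by rewrite s2; ring.
case: e; rewrite !(expr0n, mulr0, mul0r, addr0, subr0, sub0r, sqrrN) !expr_div_n r2;
  split; rewrite ?B3s; field; lra.
Qed.

Lemma norm2_convex (A0 A1 x0 y0 x1 y1 l : R) : 0 <= l <= 1 ->
  Num.sqrt (x0 ^+ 2 + y0 ^+ 2) <= A0 -> Num.sqrt (x1 ^+ 2 + y1 ^+ 2) <= A1 ->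
  Num.sqrt ((x0 + l * (x1 - x0)) ^+ 2 + (y0 + l * (y1 - y0)) ^+ 2) <= A0 + l * (A1 - A0).
Proof.
move=> /andP [l0 l1] h0 h1.
set r0 := Num.sqrt (x0 ^+ 2 + y0 ^+ 2) in h0.
set r1 := Num.sqrt (x1 ^+ 2 + y1 ^+ 2) in h1.
have r00 : 0 <= r0 by apply: sqrtr_ge0.
have r10 : 0 <= r1 by apply: sqrtr_ge0.
have e0 : r0 ^+ 2 = x0 ^+ 2 + y0 ^+ 2 by rewrite sqr_sqrtr // addr_ge0 // sqr_ge0.
have e1 : r1 ^+ 2 = x1 ^+ 2 + y1 ^+ 2 by rewrite sqr_sqrtr // addr_ge0 // sqr_ge0.
have cauchy_schwarz : x0 * x1 + y0 * y1 <= r0 * r1.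
  have : (x0 * x1 + y0 * y1) ^+ 2 <= (r0 * r1) ^+ 2.
    by rewrite exprMn e0 e1; have := sqr_ge0 (x0 * y1 - y0 * x1); nra.
  have : 0 <= r0 * r1 by apply: mulr_ge0.
  nra.
apply: sqrt_le_sqr; first by nra.
have le_mix : (x0 + l * (x1 - x0)) ^+ 2 + (y0 + l * (y1 - y0)) ^+ 2 <=
    ((1 - l) * r0 + l * r1) ^+ 2.
  have : 0 <= l * (1 - l) by apply: mulr_ge0; lra.
  nra.
apply: (le_trans le_mix); rewrite ler_sqr ?nnegrE; nra.
Qed.

Lemma sqr_div_sroot_le A B2 B3 b : 0 <= A -> B2 ^+ 2 + B3 ^+ 2 <= A ^+ 2 ->
  b ^+ 2 <= B2 ^+ 2 + B3 ^+ 2 -> (b / sroot A B2 B3) ^+ 2 <= A.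
Proof.
move=> A0 BA bB; rewrite /sroot; set s := disc A B2 B3.
have s0 : 0 <= s by apply: sqrtr_ge0.
have s2 : s ^+ 2 = A ^+ 2 - (B2 ^+ 2 + B3 ^+ 2) by rewrite sqr_sqrtr // subr_ge0.
have [->|As0] := eqVneq (A + s) 0; first by rewrite sqrtr0 invr0 mulr0 expr0n.
have As : 0 < A + s by rewrite lt_def As0 addr_ge0.
rewrite expr_div_n (sqr_sqrtr (ltW As)) ler_pdivrMr //; nra.
Qed.

End RealFacts.

Section Continuity.
Variables (R : realType) (T : topologicalType).
Implicit Types f g : T -> R.

Lemma cts_add f g : continuous f -> continuous g -> continuous (fun x => f x + g x).
Proof. by move=> hf hg x; apply: cvgD; [exact: hf | exact: hg]. Qed.
Lemma cts_sub f g : continuous f -> continuous g -> continuous (fun x => f x - g x).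
Proof. by move=> hf hg x; apply: cvgB; [exact: hf | exact: hg]. Qed.
Lemma cts_mul f g : continuous f -> continuous g -> continuous (fun x => f x * g x).
Proof. by move=> hf hg x; apply: cvgM; [exact: hf | exact: hg]. Qed.
Lemma cts_opp f : continuous f -> continuous (fun x => - f x).
Proof. by move=> hf x; apply: cvgN; exact: hf. Qed.
Lemma cts_cst (c : R) : continuous (fun _ : T => c).
Proof. exact: cst_continuous. Qed.
Lemma cts_exp f m : continuous f -> continuous (fun x => f x ^+ m).
Proof. by move=> hf x; exact: (continuous_comp (hf x) (@exprn_continuous R m _)). Qed.
Lemma cts_cos f : continuous f -> continuous (fun x => cos (f x)).
Proof. by move=> hf x; apply: (continuous_comp (hf x)); apply: continuous_cos. Qed.
Lemma cts_sin f : continuous f -> continuous (fun x => sin (f x)).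
Proof. by move=> hf x; apply: (continuous_comp (hf x)); apply: continuous_sin. Qed.
Lemma cts_sqrt f : continuous f -> continuous (fun x => Num.sqrt (f x)).
Proof. by move=> hf x; apply: (continuous_comp (hf x)); apply: sqrt_continuous. Qed.

Lemma continuous_mx_entries m m' (f : T -> 'M[R]_(m, m')) :
  (forall i j, continuous (fun x => f x i j)) -> continuous f.
Proof.
move=> hf x A [P hP sPA].
apply: (filterS (fun y (hy : forall ij : 'I_m * 'I_m', P ij.1 ij.2 (f y ij.1 ij.2)) =>
  sPA _ (fun i j => hy (i, j)))).
by apply: filter_forall => -[i j]; exact: (hf i j x _ (hP i j)).
Qed.

Lemma connected_ivt f : connected [set: T] -> continuous f ->
  forall x y, f x < 0 -> 0 < f y -> exists z, f z = 0.
Proof.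
move=> cT cf x y fx fy.
have /connected_intervalP img := connected_continuous_connected cT (continuous_subspaceT cf).
have [z _ fz] : range f 0.
  by apply: (img (f x) (f y)); [exists x|exists y|rewrite !ltW].
by exists z.
Qed.

Lemma continuous_sroot (A B2 B3 : T -> R) :
  continuous A -> continuous B2 -> continuous B3 ->
  continuous (fun t => sroot (A t) (B2 t) (B3 t)).
Proof.
move=> hA h2 h3; rewrite /sroot /disc; apply: cts_sqrt; apply: cts_add => //.
by apply/cts_sqrt/cts_sub; [|apply: cts_add]; apply: cts_exp.
Qed.

(* At a zero of the root, A vanishes and |B / sroot| <= sqrt A: the quotient
   is squeezed to its junk value 0 there. *)
Lemma continuous_div_sroot (A B2 B3 B : T -> R) :
  continuous A -> continuous B2 -> continuous B3 -> continuous B ->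
  (forall t, 0 <= A t /\ B2 t ^+ 2 + B3 t ^+ 2 <= A t ^+ 2) ->
  (forall t, B t ^+ 2 <= B2 t ^+ 2 + B3 t ^+ 2) ->
  continuous (fun t => B t / sroot (A t) (B2 t) (B3 t)).
Proof.
move=> hA h2 h3 hB hK hBB x.
have bound t : (B t / sroot (A t) (B2 t) (B3 t)) ^+ 2 <= A t.
  by have [A0 BA] := hK t; apply: sqr_div_sroot_le.
have [r0|r0] := eqVneq (sroot (A x) (B2 x) (B3 x)) 0; last first.
  have hS : {for x, continuous (fun t => sroot (A t) (B2 t) (B3 t))}.
    exact: continuous_sroot.
  have hV := @continuousV _ _ _ x r0 hS.
  by apply: cvgM; [exact: hB | exact: hV].
have Ax0 : A x = 0.
  move/eqP: (r0); rewrite /sroot sqrtr_eq0 => hle.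
  have [A0 _] := hK x; have : 0 <= disc (A x) (B2 x) (B3 x) by apply: sqrtr_ge0.
  lra.
apply/cvgrPdist_lt => e e0; rewrite r0 invr0 mulr0.
have e20 : 0 < e ^+ 2 by rewrite exprn_gt0.
move/cvgrPdist_lt: (hA x) => /(_ _ e20); apply: filterS => t.
rewrite Ax0 !sub0r !normrN => hAt.
have := bound t; have := ler_norm (A t).
by rewrite ltr_norml; move=> *; apply/andP; split; nra.
Qed.

End Continuity.

Lemma cts_rotation (R : realType) (c x y : R) :
  continuous (fun t : R => cos (t * c) * x - sin (t * c) * y) /\
  continuous (fun t : R => sin (t * c) * x + cos (t * c) * y).
Proof.
have angle : continuous (fun t : R => t * c).
  by apply: cts_mul; [move=> t; apply: cvg_id | apply: cts_cst].
by split; [apply: cts_sub|apply: cts_add]; apply: cts_mul;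
  by [apply: cts_cos | apply: cts_sin | apply: cts_cst].
Qed.

Section ToricHyperKahler.
Variables (R : realType) (d n : nat) (u : 'M[int]_(d, n)).

Local Notation pt := 'M[R]_(4, d).

Definition dot_u (a : 'I_n -> R) (k : 'I_d) : R := \sum_(j < n) a j * uR R u k j.

(* The annihilator of [ker beta] is the image of [beta^*]; [cokermx] provides
   enough vectors of [ker beta] to test membership. *)
Lemma functional_zeroP (c : 'I_d -> R) :
  functional_zero u c <-> exists a, forall k, c k = dot_u a k.
Proof.
split=> [hc|[a ha] v hv]; last first.
  under eq_bigr do rewrite ha mulr_suml.
  rewrite exchange_big big1 // => j _.
  under eq_bigr do rewrite mulrAC -mulrA.
  by rewrite -mulr_sumr hv mulr0.
pose U : 'M[R]_(d, n) := \matrix_(k, j) uR R u k j.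
have : (\row_k c k <= U^T)%MS.
  rewrite submxE; apply/eqP/matrixP => i l; rewrite !mxE.
  have hv : in_frak_n u (fun k => cokermx U^T k l).
    move=> j; have := congr1 (fun A : 'M[R]_(n, d) => A j l) (mulmx_coker U^T).
    rewrite !mxE => E; rewrite -[RHS]E; apply: eq_bigr => k _; by rewrite !mxE mulrC.
  rewrite -[RHS](hc _ hv); apply: eq_bigr => k _; by rewrite !mxE.
case/submxP => a ha; exists (fun j => a 0 j) => k.
have := congr1 (fun A : 'M[R]_(1, d) => A 0 k) ha; rewrite !mxE => ->.
by apply: eq_bigr => j _; rewrite !mxE.
Qed.

Lemma inord4_neq (i j : nat) : (i < 4)%N -> (j < 4)%N -> i != j ->
  (inord i == inord j :> 'I_4) = false.
Proof. by move=> hi hj nij; apply/eqP => /(congr1 val); rewrite /= !inordK //; apply/eqP. Qed.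

Lemma ord4P (r : 'I_4) : [\/ r = inord 0, r = inord 1, r = inord 2 | r = inord 3].
Proof.
case: r => [[|[|[|[|m]]]] hr] //;
  [constructor 1|constructor 2|constructor 3|constructor 4];
  by apply/val_inj; rewrite /= inordK.
Qed.

Definition mkpt (f0 f1 f2 f3 : 'I_d -> R) : pt :=
  \matrix_(r < 4, k < d) (if r == inord 0 :> 'I_4 then f0 k
     else if r == inord 1 :> 'I_4 then f1 k
     else if r == inord 2 :> 'I_4 then f2 k else f3 k).

Lemma mkptE f0 f1 f2 f3 k :
  [/\ zre (mkpt f0 f1 f2 f3) k = f0 k, zim (mkpt f0 f1 f2 f3) k = f1 k,
      wre (mkpt f0 f1 f2 f3) k = f2 k & wim (mkpt f0 f1 f2 f3) k = f3 k].
Proof. by split; rewrite /zre /zim /wre /wim !mxE ?eqxx ?inord4_neq // ?eqxx. Qed.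

Lemma act_mkpt th (p : pt) : act th p =
  mkpt (fun k => cos (th k) * zre p k - sin (th k) * zim p k)
       (fun k => sin (th k) * zre p k + cos (th k) * zim p k)
       (fun k => cos (th k) * wre p k - sin (th k) * wim p k)
       (fun k => sin (th k) * wre p k + cos (th k) * wim p k).
Proof. by []. Qed.

Lemma actE th (p : pt) k :
  [/\ zre (act th p) k = cos (th k) * zre p k - sin (th k) * zim p k,
      zim (act th p) k = sin (th k) * zre p k + cos (th k) * zim p k,
      wre (act th p) k = cos (th k) * wre p k - sin (th k) * wim p k &
      wim (act th p) k = sin (th k) * wre p k + cos (th k) * wim p k].
Proof. by rewrite act_mkpt; apply: mkptE. Qed.

Lemma pt_eq (p q : pt) : (forall k, [/\ zre p k = zre q k, zim p k = zim q k,
  wre p k = wre q k & wim p k = wim q k]) -> p = q.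
Proof.
move=> h; apply/matrixP => r k; have [e0 e1 e2 e3] := h k.
by case: (ord4P r) => ->.
Qed.

Lemma act0 (p : pt) : act (fun=> 0) p = p.
Proof.
apply: pt_eq => k; have [-> -> -> ->] := actE (fun=> 0) p k.
by rewrite /= cos0 sin0 !mul1r !mul0r !subr0 !add0r.
Qed.

Definition nz2 (p : pt) k := zre p k ^+ 2 + zim p k ^+ 2.
Definition nw2 (p : pt) k := wre p k ^+ 2 + wim p k ^+ 2.
Definition zwS (p : pt) k := zre p k * wim p k - zim p k * wre p k.
Definition zwT (p : pt) k := zre p k * wre p k + zim p k * wim p k.

Lemma zw_lagrange (p : pt) k : zwS p k ^+ 2 + zwT p k ^+ 2 = nz2 p k * nw2 p k.
Proof. by rewrite /zwS /zwT /nz2 /nw2; ring. Qed.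

Lemma act_invariants th (p : pt) k :
  [/\ nz2 (act th p) k = nz2 p k, nw2 (act th p) k = nw2 p k,
      zwS (act th p) k = zwS p k & zwT (act th p) k = zwT p k].
Proof.
rewrite /nz2 /nw2 /zwS /zwT; have [-> -> -> ->] := actE th p k.
have h := cos2Dsin2 (th k); set c := cos _ in h *; set s := sin _ in h *.
by split; rewrite -[RHS]mul1r -h; ring.
Qed.

Lemma orbit_of_invariants (p q : pt) : (forall k,
    [/\ nz2 p k = nz2 q k, nw2 p k = nw2 q k, zwS p k = zwS q k & zwT p k = zwT q k]) ->
  exists th, q = act th p.
Proof.
move=> h.
have rot k : exists t, [/\ zre q k = cos t * zre p k - sin t * zim p k,
    zim q k = sin t * zre p k + cos t * zim p k,
    wre q k = cos t * wre p k - sin t * wim p k &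
    wim q k = sin t * wre p k + cos t * wim p k].
  have [hz hw hS hT] := h k.
  have [c [s [cs e1 e2 e3 e4]]] := common_rotation hz hw hS hT.
  by have [t [ct st]] := unit_circle_angle cs; exists t; rewrite ct st.
have [th hth] := choice rot.
by exists th; apply: pt_eq => k; have [-> -> -> ->] := actE th p k; have [] := hth k.
Qed.


Variables (lam1 lam2 lam3 : 'I_d -> R).
Local Notation aK := (a_k u lam1).
Local Notation b2K := (b2_k u lam2).
Local Notation b3K := (b3_k u lam3).
Local Notation K := (inK u lam1 lam2 lam3).
Local Notation absB := (abs_b_k u lam2 lam3).
Local Notation muz := (mu_zero u lam1 lam2 lam3).

(* [phi(p) = (a, b2 + i b3)], where phi is the moment map of the residual torus. *)
Definition lies_over (p : pt) a b2 b3 := forall k, [/\ 2^-1 * (nz2 p k + nw2 p k) = aK a k,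
  zwS p k = b2K b2 k & zwT p k = b3K b3 k].

Lemma mu_zeroP p : muz p <-> exists a b2 b3, lies_over p a b2 b3.
Proof.
have shiftP (x l : 'I_d -> R) : functional_zero u (fun k => x k + l k) <->
    exists a, forall k, x k = dot_u a k - l k.
  rewrite functional_zeroP; split=> -[a ha]; exists a => k.
    by rewrite -ha addrK.
  by rewrite ha subrK.
rewrite /mu_zero /=.
have -> : coeff_I lam1 p = fun k => 2^-1 * (nz2 p k + nw2 p k) + lam1 k.
  by apply: funext => k; rewrite /coeff_I /nz2 /nw2 !addrA.
split.
  move=> [/shiftP[a ha] [/(shiftP (zwS p))[b2 hb2] /(shiftP (zwT p))[b3 hb3]]].
  by exists a, b2, b3.
move=> [a [b2 [b3 h]]].
by split; [|split]; [apply/shiftP; exists a|apply/(shiftP (zwS p)); exists b2|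
  apply/(shiftP (zwT p)); exists b3] => k; case: (h k).
Qed.

Lemma act_lies_over th p a b2 b3 : lies_over p a b2 b3 -> lies_over (act th p) a b2 b3.
Proof. by move=> hp k; have [-> -> -> ->] := act_invariants th p k. Qed.

Lemma act_mu_zero th p : muz p -> muz (act th p).
Proof.
by move=> /mu_zeroP[a [b2 [b3 hp]]]; apply/mu_zeroP; exists a, b2, b3; apply: act_lies_over.
Qed.

Lemma lies_over_disc p a b2 b3 k : lies_over p a b2 b3 ->
  disc (aK a k) (b2K b2 k) (b3K b3 k) = `|nz2 p k - nw2 p k| / 2.
Proof.
move=> /(_ k) [<- <- <-]; rewrite /disc zw_lagrange.
rewrite (_ : _ - _ = ((nz2 p k - nw2 p k) / 2) ^+ 2); last by field.
by rewrite sqrtr_sqr normrM normfV (@ger0_norm _ 2).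
Qed.

Lemma lies_over_inK p a b2 b3 : lies_over p a b2 b3 -> K a b2 b3.
Proof.
move=> hp k; rewrite /abs_b_k; have [<- <- <-] := hp k.
have [x0 y0] : 0 <= nz2 p k /\ 0 <= nw2 p k by rewrite /nz2 /nw2; split; nra.
apply: sqrt_le_sqr; first by nra.
rewrite zw_lagrange; have := sqr_ge0 (nz2 p k - nw2 p k); nra.
Qed.

Lemma inK_bounds a b2 b3 k : K a b2 b3 ->
  0 <= aK a k /\ b2K b2 k ^+ 2 + b3K b3 k ^+ 2 <= aK a k ^+ 2.
Proof.
move=> /(_ k); rewrite /abs_b_k => hk.
have A0 : 0 <= aK a k by apply: le_trans hk; apply: sqrtr_ge0.
split=> //; rewrite -(@sqr_sqrtr _ (_ + _)) ?addr_ge0 ?sqr_ge0 //.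
by rewrite ler_sqr ?nnegrE ?sqrtr_ge0.
Qed.

Definition section (e : 'I_d -> bool) a b2 b3 : pt :=
  mkpt (fun k => sec_zre (e k) (aK a k) (b2K b2 k) (b3K b3 k))
       (fun k => sec_zim (e k) (aK a k) (b2K b2 k) (b3K b3 k))
       (fun k => sec_wre (e k) (aK a k) (b2K b2 k) (b3K b3 k))
       (fun k => sec_wim (e k) (aK a k) (b2K b2 k) (b3K b3 k)).

Lemma sectionE e a b2 b3 k :
  [/\ zre (section e a b2 b3) k = sec_zre (e k) (aK a k) (b2K b2 k) (b3K b3 k),
      zim (section e a b2 b3) k = sec_zim (e k) (aK a k) (b2K b2 k) (b3K b3 k),
      wre (section e a b2 b3) k = sec_wre (e k) (aK a k) (b2K b2 k) (b3K b3 k) &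
      wim (section e a b2 b3) k = sec_wim (e k) (aK a k) (b2K b2 k) (b3K b3 k)].
Proof. exact: mkptE. Qed.

Lemma section_spec e a b2 b3 : K a b2 b3 ->
  lies_over (section e a b2 b3) a b2 b3 /\ forall k, nz2 (section e a b2 b3) k =
    if e k then aK a k + disc (aK a k) (b2K b2 k) (b3K b3 k)
    else aK a k - disc (aK a k) (b2K b2 k) (b3K b3 k).
Proof.
move=> hK; have spec k := sec_spec (e k) (inK_bounds k hK).1 (inK_bounds k hK).2.
split=> k; rewrite /nz2 /nw2 /zwS /zwT; have [-> -> ew ew'] := sectionE e a b2 b3 k.
  by rewrite ew ew'; case: (spec k).
by case: (spec k).
Qed.

Lemma section_mu_zero e a b2 b3 : K a b2 b3 -> muz (section e a b2 b3).
Proof. by move=> hK; apply/mu_zeroP; exists a, b2, b3; case: (section_spec e hK). Qed.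

Lemma orbit_of_lies_over p q a b2 b3 : lies_over p a b2 b3 -> lies_over q a b2 b3 ->
  (forall k, nz2 p k = nz2 q k) -> exists th, q = act th p.
Proof.
move=> hp hq hz; apply: orbit_of_invariants => k.
have [hpA hpS hpT] := hp k; have [hqA hqS hqT] := hq k.
split; [exact: hz| |by rewrite hpS hqS|by rewrite hpT hqT].
apply: (@addrI _ (nz2 p k)); rewrite [in RHS]hz.
by apply: (mulfI (x := 2^-1)); rewrite ?invr_eq0 ?pnatr_eq0 // hpA hqA.
Qed.

Lemma mu_zero_section_orbit p : muz p ->
  exists e a b2 b3, K a b2 b3 /\ exists th, p = act th (section e a b2 b3).
Proof.
move=> /mu_zeroP[a [b2 [b3 hp]]]; have hK := lies_over_inK hp.
pose e k := nw2 p k <= nz2 p k.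
exists e, a, b2, b3; split=> //.
have [hs hsz] := section_spec e hK.
apply: (orbit_of_lies_over hs hp) => k.
rewrite hsz (lies_over_disc k hp); have [hA _ _] := hp k; rewrite -hA /e.
by case: leP => h; [rewrite ger0_norm ?subr_ge0 | rewrite ltr0_norm ?subr_lt0] => //; field.
Qed.

Lemma section_flip e e' a b2 b3 : K a b2 b3 ->
  (forall k, e k = e' k \/ disc (aK a k) (b2K b2 k) (b3K b3 k) = 0) ->
  exists th, section e' a b2 b3 = act th (section e a b2 b3).
Proof.
move=> hK he; have [hs hsz] := section_spec e hK; have [hs' hsz'] := section_spec e' hK.
apply: orbit_of_lies_over hs hs' _ => k; rewrite hsz hsz'.
by case: (he k) => [->|->]; last by case: (e k); case: (e' k); rewrite ?addr0 ?subr0.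
Qed.

Local Open Scope quotient_scope.
Local Notation MM := (M u lam1 lam2 lam3).
Local Notation conn := (connected_component [set: MM]).

Definition cls p (hp : muz p) : MM := \pi_MM (exist _ p (mem_set hp) : set_type muz).

Lemma cls_eq p q (hp : muz p) (hq : muz q) : p = q -> cls hp = cls hq.
Proof. by move=> epq; subst q; rewrite /cls; congr (\pi_MM _); apply/val_inj. Qed.

Lemma repr_mu_zero (x : MM) : muz (val (repr x)).
Proof. exact/set_mem/valP. Qed.

Lemma cls_repr (x : MM) : cls (repr_mu_zero x) = x.
Proof. by rewrite /cls -[RHS]reprK; congr (\pi_MM _); apply/val_inj. Qed.

Lemma repr_pi_orbit (q : set_type muz) : exists th, val (repr (\pi_MM q)) = act th (val q).
Proof.
have /eqquotP/asboolP orb_eq : repr (\pi_MM q) = q %[mod Mq u lam1 lam2 lam3] by rewrite reprK.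
have : Defs.orbit (repr (\pi_MM q)) (repr (\pi_MM q)).
  by exists (fun=> 0); split; [exists (fun=> 0) => j; rewrite big1 ?mulr0 // => k _; rewrite mul0r
    | rewrite act0].
by rewrite orb_eq => -[th [_ e]]; exists th.
Qed.

Lemma path_component (P : R -> pt) (hP : forall t, muz (P t)) :
  (forall i j, continuous (fun t => P t i j)) -> forall t, conn (cls (hP 0)) (cls (hP t)).
Proof.
move=> hc t; pose g t := cls (hP t).
pose f t := exist _ (P t) (mem_set (hP t)) : set_type muz.
have fc : continuous f.
  apply: (@continuous_comp_initial _ _ _ (@set_val _ muz)).
  exact: continuous_mx_entries.
have gc : continuous g by move=> s; apply: (continuous_comp (fc s)); exact: pi_continuous.
have : connected (g @` setT).
  apply: connected_continuous_connected; last exact: continuous_subspaceT.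
  by apply/connected_intervalP => x y _ _ z _.
by move=> hcon; apply: (connected_component_max (B := g @` setT)) => //; by [exists 0|exists t].
Qed.

Lemma mkpt_continuous (f0 f1 f2 f3 : R -> 'I_d -> R) :
  (forall k, continuous (fun t => f0 t k)) -> (forall k, continuous (fun t => f1 t k)) ->
  (forall k, continuous (fun t => f2 t k)) -> (forall k, continuous (fun t => f3 t k)) ->
  forall i j, continuous (fun t => mkpt (f0 t) (f1 t) (f2 t) (f3 t) i j).
Proof.
move=> h0 h1 h2 h3 i j; under eq_fun do rewrite mxE.
case: (ord4P i) => ->; rewrite ?eqxx ?inord4_neq //.
all: first [exact: h0 | exact: h1 | exact: h2 | exact: h3].
Qed.

Lemma act_component p (hp : muz p) th : conn (cls hp) (cls (act_mu_zero th hp)).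
Proof.
pose P t := act (fun k => t * th k) p.
have hP t : muz (P t) by apply: act_mu_zero.
have e0 : P 0 = p.
  by rewrite /P (_ : (fun k => _) = fun=> 0) ?act0 //; apply/funext => k; rewrite mul0r.
have e1 : P 1 = act th p.
  by rewrite /P (_ : (fun k => _) = th) //; apply/funext => k; rewrite mul1r.
rewrite -(cls_eq (hP 0) hp e0) -(cls_eq (hP 1) _ e1); apply: path_component => i j.
rewrite /P; under eq_fun do rewrite act_mkpt.
by apply: mkpt_continuous => k;
  first [exact: (cts_rotation _ _ _).1 | exact: (cts_rotation _ _ _).2].
Qed.

Definition lerp (x y : 'I_n -> R) l : 'I_n -> R := fun j => x j + l * (y j - x j).

Lemma dot_u_lerp x y l k (c : R) :
  dot_u (lerp x y l) k - c = dot_u x k - c + l * ((dot_u y k - c) - (dot_u x k - c)).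
Proof.
rewrite /dot_u /lerp (eq_bigr (fun j => x j * uR R u k j +
  l * (y j * uR R u k j - x j * uR R u k j))); last by move=> j _; ring.
by rewrite big_split /= -mulr_sumr sumrB; ring.
Qed.

Lemma inK_lerp a0 b20 b30 a1 b21 b31 l : 0 <= l <= 1 -> K a0 b20 b30 -> K a1 b21 b31 ->
  K (lerp a0 a1 l) (lerp b20 b21 l) (lerp b30 b31 l).
Proof.
move=> hl h0 h1 k; rewrite /abs_b_k /a_k /b2_k /b3_k.
by rewrite !(dot_u_lerp _ _ l); apply: norm2_convex; [| exact: h0 k | exact: h1 k].
Qed.

(* A ramp from 0 (at t = 0) to 1 (at t = pi) with values in [0, 1]: segments of
   K become paths parametrised by the connected space R. *)
Definition cos_ramp (t : R) : R := (1 - cos t) / 2.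

Lemma cos_ramp_range t : 0 <= cos_ramp t <= 1.
Proof.
rewrite /cos_ramp; have := cos_geN1 t; have := cos_le1 t => h1 h2.
by apply/andP; split; [apply: divr_ge0 | rewrite ler_pdivrMr]; lra.
Qed.

Lemma lerp_cos_ramp0 x y : lerp x y (cos_ramp 0) = x.
Proof. by apply/funext => j; rewrite /lerp /cos_ramp cos0 subrr mul0r mul0r addr0. Qed.

Lemma lerp_cos_ramp_pi x y : lerp x y (cos_ramp pi) = y.
Proof.
apply/funext => j; rewrite /lerp /cos_ramp cospi opprK divff ?pnatr_eq0 //.
by rewrite mul1r addrC subrK.
Qed.

Lemma continuous_lerp_ramp x y (c : R) k :
  continuous (fun t => dot_u (lerp x y (cos_ramp t)) k - c).
Proof.
under eq_fun do rewrite dot_u_lerp.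
apply: cts_add; first exact: cts_cst.
apply: cts_mul; last exact: cts_cst.
apply: cts_mul; last exact: cts_cst.
by apply: cts_sub; [apply: cts_cst | apply: cts_cos => t; apply: cvg_id].
Qed.

Lemma segment_component e a0 b20 b30 a1 b21 b31 (h0 : K a0 b20 b30) (h1 : K a1 b21 b31) :
  conn (cls (section_mu_zero e h0)) (cls (section_mu_zero e h1)).
Proof.
pose P t := section e (lerp a0 a1 (cos_ramp t)) (lerp b20 b21 (cos_ramp t))
  (lerp b30 b31 (cos_ramp t)).
have hK t : K (lerp a0 a1 (cos_ramp t)) (lerp b20 b21 (cos_ramp t)) (lerp b30 b31 (cos_ramp t)).
  exact: inK_lerp (cos_ramp_range t) h0 h1.
have hP t : muz (P t) by apply: section_mu_zero.
have e0 : P 0 = section e a0 b20 b30 by rewrite /P !lerp_cos_ramp0.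
have e1 : P pi = section e a1 b21 b31 by rewrite /P !lerp_cos_ramp_pi.
rewrite -(cls_eq (hP 0) _ e0) -(cls_eq (hP pi) _ e1); apply: path_component => i j.
pose A k t := aK (lerp a0 a1 (cos_ramp t)) k.
pose B2 k t := b2K (lerp b20 b21 (cos_ramp t)) k.
pose B3 k t := b3K (lerp b30 b31 (cos_ramp t)) k.
have cA k : continuous (A k) by exact: continuous_lerp_ramp.
have c2 k : continuous (B2 k) by exact: continuous_lerp_ramp.
have c3 k : continuous (B3 k) by exact: continuous_lerp_ramp.
have hb k t : 0 <= A k t /\ B2 k t ^+ 2 + B3 k t ^+ 2 <= A k t ^+ 2 by apply: inK_bounds.
have d2 k : continuous (fun t => B2 k t / sroot (A k t) (B2 k t) (B3 k t)).
  by apply: continuous_div_sroot => // t; have := sqr_ge0 (B3 k t); lra.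
have d3 k : continuous (fun t => B3 k t / sroot (A k t) (B2 k t) (B3 k t)).
  by apply: continuous_div_sroot => // t; have := sqr_ge0 (B2 k t); lra.
have s0 k : continuous (fun t => sroot (A k t) (B2 k t) (B3 k t)) by apply: continuous_sroot.
rewrite /P /section; apply: mkpt_continuous => k;
  rewrite /sec_zre /sec_zim /sec_wre /sec_wim; case: (e k).
- exact: s0.
- exact: d3.
- exact: cts_cst.
- exact: cts_opp (d2 k).
- exact: d3.
- exact: s0.
- exact: d2.
- exact: cts_cst.
Qed.

Lemma section_gap e a b2 b3 k : K a b2 b3 ->
  nz2 (section e a b2 b3) k - nw2 (section e a b2 b3) k =
  (if e k then 1 else -1) * (2 * disc (aK a k) (b2K b2 k) (b3K b3 k)).
Proof.
move=> hK; have [/(_ k) [hA _ _] /(_ k) hz] := section_spec e hK.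
have hw : nw2 (section e a b2 b3) k = 2 * aK a k - nz2 (section e a b2 b3) k.
  by rewrite -hA; field.
by rewrite hw hz; case: (e k); ring.
Qed.

Definition gap k (x : MM) : R := nz2 (val (repr x)) k - nw2 (val (repr x)) k.

Lemma gap_pi k (q : set_type muz) : gap k (\pi_MM q) = nz2 (val q) k - nw2 (val q) k.
Proof.
rewrite /gap; have [th ->] := repr_pi_orbit q.
by have [-> -> _ _] := act_invariants th (val q) k.
Qed.

Lemma gap_continuous k : continuous (gap k).
Proof.
apply/quotient_continuous.
rewrite (_ : _ \o _ = fun q : set_type muz => nz2 (val q) k - nw2 (val q) k);
  last by apply/funext => q; exact: gap_pi.
move=> q; apply: (@continuous_comp _ _ _ set_val (fun p : pt => nz2 p k - nw2 p k)).
  exact: initial_continuous.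
have c r : continuous (fun p : pt => p (inord r) k ^+ 2) by apply: cts_exp; apply: coord_continuous.
by apply: cts_sub; apply: cts_add; apply: c.
Qed.

Lemma flip_component e k a0 b20 b30 (h0 : K a0 b20 b30) :
  (exists a b2 b3, K a b2 b3 /\ aK a k = absB b2 b3 k) ->
  conn (cls (section_mu_zero e h0)) (cls (section_mu_zero (fun j => (j == k) || e j) h0)).
Proof.
move=> [a [b2 [b3 [hK touch]]]]; set e' := fun j => _.
apply: (connected_component_trans (segment_component e h0 hK)).
apply: (connected_component_trans _ (connected_component_sym (segment_component e' h0 hK))).
have [th eth] : exists th, section e' a b2 b3 = act th (section e a b2 b3).
  apply: section_flip => // j; rewrite /e'; case: eqP => [->|_]; last by left.
  by right; have [A0 BA] := inK_bounds k hK; apply/disc_eq0P.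
by rewrite (cls_eq _ (act_mu_zero th (section_mu_zero e hK)) eth); apply: act_component.
Qed.

Lemma sections_component a b2 b3 (hK : K a b2 b3) :
  (forall k, exists a b2 b3, K a b2 b3 /\ aK a k = absB b2 b3 k) ->
  forall e, conn (cls (section_mu_zero e hK)) (cls (section_mu_zero (fun=> true) hK)).
Proof.
move=> touch; suff flip m e : #|[pred k | ~~ e k]| = m ->
    conn (cls (section_mu_zero e hK)) (cls (section_mu_zero (fun=> true) hK)).
  by move=> e; exact: (flip _ e erefl).
elim: m e => [|m ih] e hm.
  have -> : e = fun=> true.
    by apply/funext => k; apply/negPn/negP => hk; have := card0_eq hm k; rewrite !inE hk.
  exact: connected_component_refl.
have [k hk] : exists k, ~~ e k.
  have /card_gt0P[k] : (0 < #|[pred k | ~~ e k]|)%N by rewrite hm.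
  by rewrite inE; exists k.
apply: (connected_component_trans (flip_component e hK (touch k))); apply: ih.
move: hm; rewrite (cardD1 k) inE hk add1n => -[<-].
by apply: eq_card => j; rewrite !inE negb_or.
Qed.

Lemma connected_of_touching : [set: MM] !=set0 ->
  (forall k, exists a b2 b3, K a b2 b3 /\ aK a k = absB b2 b3 k) -> connected [set: MM].
Proof.
move=> [x0 _] touch.
have [a0 [b20 [b30 /lies_over_inK hK0]]] := (mu_zeroP _).1 (repr_mu_zero x0).
pose base := cls (section_mu_zero (fun=> true) hK0).
suff all_base x : conn base x.
  rewrite (_ : [set: MM] = conn base); first exact: component_connected.
  by apply/predeqP => x; split=> // _; apply: all_base.
rewrite -(cls_repr x).
have [e [a [b2 [b3 [hK [th eth]]]]]] := mu_zero_section_orbit (repr_mu_zero x).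
rewrite (cls_eq _ (act_mu_zero th (section_mu_zero e hK)) eth).
apply: (connected_component_trans (connected_component_sym (sections_component hK0 touch e))).
apply: (connected_component_trans (segment_component e hK0 hK)).
exact: act_component.
Qed.

Lemma touching_of_connected : [set: MM] !=set0 -> connected [set: MM] ->
  forall k, exists a b2 b3, K a b2 b3 /\ aK a k = absB b2 b3 k.
Proof.
move=> [x0 _] hc k; apply: contrapT => untouched.
have disc_neq0 a b2 b3 : K a b2 b3 -> disc (aK a k) (b2K b2 k) (b3K b3 k) != 0.
  move=> hK; apply/eqP => /disc_eq0P h; apply: untouched; exists a, b2, b3.
  by have [A0 BA] := inK_bounds k hK; split; last exact: h.
have gap_neq0 x : gap k x != 0.
  have [a [b2 [b3 hp]]] := (mu_zeroP _).1 (repr_mu_zero x).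
  apply: contraNneq (disc_neq0 _ _ _ (lies_over_inK hp)) => g0.
  by rewrite (lies_over_disc k hp) -/(gap k x) g0 normr0 mul0r.
have [a [b2 [b3 /lies_over_inK hK]]] := (mu_zeroP _).1 (repr_mu_zero x0).
have s_gt0 : 0 < disc (aK a k) (b2K b2 k) (b3K b3 k).
  by rewrite lt_def disc_neq0 ?sqrtr_ge0.
have gap_section e : gap k (cls (section_mu_zero e hK)) =
    (if e k then 1 else -1) * (2 * disc (aK a k) (b2K b2 k) (b3K b3 k)).
  by rewrite /cls gap_pi section_gap.
have neg : gap k (cls (section_mu_zero (fun=> false) hK)) < 0 by rewrite gap_section; lra.
have pos : 0 < gap k (cls (section_mu_zero (fun=> true) hK)) by rewrite gap_section; lra.
have [z gz] := connected_ivt hc (@gap_continuous k) neg pos.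
by move: (gap_neq0 z); rewrite gz eqxx.
Qed.

End ToricHyperKahler.

Unset Implicit Arguments.

Theorem corollary5p4 (R : realType) (d n : nat) (u : 'M[int]_(d, n))
  (lam1 lam2 lam3 : 'I_d -> R) :
  row_full (map_mx (fun x : int => x%:~R : R) u) ->
  [set: M u lam1 lam2 lam3] !=set0 ->
  (connected [set: M u lam1 lam2 lam3] <->
   forall k : 'I_d, exists (a b2 b3 : 'I_n -> R),
     inK u lam1 lam2 lam3 a b2 b3 /\ a_k u lam1 a k = abs_b_k u lam2 lam3 b2 b3 k).
Proof.
move=> _ hne; split.
- exact: touching_of_connected hne.
- exact: connected_of_touching hne.
Qed.
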